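(* Let $k\ge 3$, $n_1,\dots,n_k\ge 2$ and $r\in[k]$. The complete $k$-partite graph $K_{n_1,\dots,n_k}$ and the clique-star $CS^r_{n_1,\dots,n_k}$ (on the same vertex set) are not locally equivalent; that is, $\mathcal{O}(K_{n_1,\dots,n_k})\cap\mathcal{O}(CS^r_{n_1,\dots,n_k})=\emptyset$.
   Context: Both graphs are on vertex set $U_1\sqcup\cdots\sqcup U_k$ with $|U_i|=n_i$. $K_{n_1,\dots,n_k}$: edges exactly between different parts. $CS^r_{n_1,\dots,n_k}$: each $U_i$ is a clique, every vertex of $U_r$ is adjacent to every vertex of each $U_i$ with $i\ne r$, and no edges between $U_i,U_l$ for distinct $i,l\ne r$. The local complement $c_v(G)$ complements the edges among the neighbours of $v$; two graphs are locally equivalent if related by a finite sequence of local complements; $\mathcal{O}(G)$ is the set of graphs locally equivalent to $G$. *)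

From mathcomp Require Import all_boot.
Set Implicit Arguments. Unset Strict Implicit. Unset Printing Implicit Defensive.

Definition graph (V : finType) := rel V.

Definition local_compl (V : finType) (G : graph V) (v : V) : graph V :=
  fun x y => if [&& x != y, G v x & G v y] then ~~ G x y else G x y.

Definition lc_seq (V : finType) (G : graph V) (s : seq V) : graph V :=
  foldl (@local_compl V) G s.

Definition loc_equiv (V : finType) (G H : graph V) : Prop :=
  exists s : seq V, forall x y, lc_seq G s x y = H x y.

Definition orbit_lc (V : finType) (G : graph V) : graph V -> Prop := loc_equiv G.

(* vertex set U_1 ⊔ ... ⊔ U_k, with |U_i| = n_i ; a vertex is a pair (part i, index) *)
Definition kvert {k : nat} (n : 'I_k -> nat) : finType := {i : 'I_k & 'I_(n i)}.

Definition complete_multipartite {k : nat} (n : 'I_k -> nat) : graph (kvert n) :=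
  fun x y => tag x != tag y.

Definition clique_star {k : nat} (n : 'I_k -> nat) (r : 'I_k) : graph (kvert n) :=
  fun x y => if tag x == tag y then x != y else (tag x == r) || (tag y == r).

Arguments kvert {k} n.
Arguments complete_multipartite {k} n _ _.
Arguments clique_star {k} n r _ _.

From mathcomp Require Import all_boot all_algebra.
Set Implicit Arguments. Unset Strict Implicit. Unset Printing Implicit Defensive.
Import GRing.Theory.
Local Open Scope ring_scope.

(* The cut-rank of a vertex set X, the rank over F_2 of the adjacency matrix
   between X and its complement, is invariant under local complementation:
   complementing at a vertex v of X adds row v to the rows of the neighbours of
   v, and the case of v outside X is the transposed one.  Let X contain one
   vertex from each part.  Rows and columns of the cut matrix then only depend on
   the part, so its rank is that of a k x k matrix over F_2: J + I for the
   complete multipartite graph and I + e_r 1^T + 1 e_r^T for the clique-star.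
   The first is invertible exactly when k is even, the second exactly when k is
   odd, so the two graphs have different cut-ranks at X. *)

Lemma natrF2 (m : nat) : m%:R = (odd m)%:R :> 'F_2.
Proof. by rewrite -Fp_nat_mod // modn2. Qed.

Lemma mxrank_mxsub (F : fieldType) m n m' n' (f : 'I_m' -> 'I_m) (g : 'I_n' -> 'I_n)
    (A : 'M[F]_(m, n)) :
  (\rank (mxsub f g A) <= \rank A)%N.
Proof.
rewrite mxsubrc; apply: leq_trans (mxrankS (rowsub_sub f _)) _.
rewrite -mxrank_tr (trmx_mxsub id g) -(mxrank_tr A).
exact: mxrankS (rowsub_sub g _).
Qed.

Section CutRank.
Variable T : finType.
Implicit Types (G : rel T) (X Y : {set T}) (v : T).

Definition cut_mx G X Y : 'M['F_2]_(#|X|, #|Y|) :=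
  \matrix_(i, j) (G (enum_val i) (enum_val j))%:R.

Definition cut_rank G X := \rank (cut_mx G X (~: X)).

Lemma eq_cut_mx G G' X Y : G =2 G' -> cut_mx G X Y = cut_mx G' X Y.
Proof. by move=> eqG; apply/matrixP => i j; rewrite !mxE eqG. Qed.

Lemma tr_cut_mx G X Y : symmetric G -> (cut_mx G X Y)^T = cut_mx G Y X.
Proof. by move=> symG; apply/matrixP => i j; rewrite !mxE symG. Qed.

Lemma symmetric_local_compl G v : symmetric G -> symmetric (local_compl G v).
Proof.
by move=> symG x y; rewrite /local_compl eq_sym (symG x y) [G v x && _]andbC.
Qed.

Lemma irreflexive_local_compl G v : irreflexive G -> irreflexive (local_compl G v).
Proof. by move=> irrG x; rewrite /local_compl eqxx /= irrG. Qed.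

Lemma local_complK G v : irreflexive G -> local_compl (local_compl G v) v =2 G.
Proof.
move=> irrG x y; rewrite /local_compl irrG /= !andbF.
by case: ifP => Gxy; rewrite Gxy ?negbK.
Qed.

Lemma cut_rank_local_compl_le_in G X Y v : [disjoint X & Y] -> v \in X ->
  (\rank (cut_mx (local_compl G v) X Y) <= \rank (cut_mx G X Y))%N.
Proof.
move=> dXY vX.
(* Entry (x, y) changes by G v x * G v y, and G v y is entry (v, y). *)
pose a : 'cV['F_2]_#|X| := \col_i (G v (enum_val i))%:R.
suff -> : cut_mx (local_compl G v) X Y =
          (1%:M + a *m delta_mx 0 (enum_rank_in vX v)) *m cut_mx G X Y.
  exact: mxrankM_maxr.
rewrite mulmxDl mul1mx -mulmxA -rowE; apply/matrixP => i j.
rewrite !mxE big_ord1 !mxE enum_rankK_in // /local_compl.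
have -> : enum_val i != enum_val j.
  by apply: contraTneq (enum_valP j) => <-; rewrite (disjointFr dXY) ?enum_valP.
by case: (G v _); case: (G v _); case: (G _ _); apply/eqP.
Qed.

Lemma cut_rank_local_compl_le G X Y v : symmetric G -> [disjoint X & Y] ->
  v \in X :|: Y ->
  (\rank (cut_mx (local_compl G v) X Y) <= \rank (cut_mx G X Y))%N.
Proof.
move=> symG dXY /setUP[vX|vY]; first exact: cut_rank_local_compl_le_in.
have symGv := symmetric_local_compl v symG.
rewrite -mxrank_tr -(mxrank_tr (cut_mx G X Y)) !tr_cut_mx //.
by apply: cut_rank_local_compl_le_in; rewrite // disjoint_sym.
Qed.

Lemma cut_rank_local_compl G X v : symmetric G -> irreflexive G ->
  cut_rank (local_compl G v) X = cut_rank G X.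
Proof.
move=> symG irrG; have dX : [disjoint X & ~: X] by rewrite -setI_eq0 setICr.
have vXY : v \in X :|: ~: X by rewrite setUCr inE.
apply/eqP; rewrite /cut_rank eqn_leq cut_rank_local_compl_le //=.
rewrite -{1}(eq_cut_mx _ _ (local_complK v irrG)).
apply: cut_rank_local_compl_le => //; exact: symmetric_local_compl.
Qed.

Lemma cut_rank_lc_seq G X s : symmetric G -> irreflexive G ->
  cut_rank (lc_seq G s) X = cut_rank G X.
Proof.
elim: s G => [//|v s IHs] G symG irrG /=.
rewrite IHs ?cut_rank_local_compl //.
  exact: symmetric_local_compl.
exact: irreflexive_local_compl.
Qed.

Lemma cut_rank_loc_equiv G H X : symmetric G -> irreflexive G ->
  loc_equiv G H -> cut_rank H X = cut_rank G X.
Proof.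
move=> symG irrG [s GsH].
by rewrite -(cut_rank_lc_seq X s symG irrG) /cut_rank (eq_cut_mx _ _ GsH).
Qed.

Lemma cut_rank_quotient G X Y m (f : T -> 'I_m) (a b : 'I_m -> T) :
  (forall p, a p \in X) -> (forall q, b q \in Y) ->
  {in X & Y, forall x y, G x y = G (a (f x)) (b (f y))} ->
  \rank (cut_mx G X Y) = \rank (\matrix_(p, q) (G (a p) (b q))%:R : 'M['F_2]_m).
Proof.
move=> aX bY Gab; apply/eqP; rewrite eqn_leq; apply/andP; split.
  have -> : cut_mx G X Y = mxsub (f \o enum_val) (f \o enum_val)
                             (\matrix_(p, q) (G (a p) (b q))%:R).
    by apply/matrixP => i j; rewrite !mxE Gab ?enum_valP.
  exact: mxrank_mxsub.
have -> : \matrix_(p, q) (G (a p) (b q))%:R =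
          mxsub (fun p => enum_rank_in (aX p) (a p))
                (fun q => enum_rank_in (bY q) (b q)) (cut_mx G X Y).
  by apply/matrixP => p q; rewrite !mxE !enum_rankK_in.
exact: mxrank_mxsub.
Qed.

End CutRank.

Lemma notunitmx_ker (R : comUnitRingType) m (A : 'M[R]_m) (v : 'cV[R]_m) :
  v != 0 -> A *m v = 0 -> A \notin unitmx.
Proof.
by move=> nz_v Av0; apply: contra nz_v => uA; rewrite -(mulKmx uA v) Av0 mulmx0.
Qed.

Section ParityMatrices.
Variable k : nat.
Implicit Types (p q r : 'I_k) (F : 'I_k -> 'F_2).

Definition complete_multipartite_mx : 'M['F_2]_k := \matrix_(p, q) (p != q)%:R.

Definition clique_star_mx r : 'M['F_2]_k :=
  \matrix_(p, q) [|| p == q, p == r | q == r]%:R.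

Lemma complete_multipartite_mxE p q :
  complete_multipartite_mx p q = 1 + (p == q)%:R.
Proof. by rewrite mxE; case: (p == q); apply/eqP. Qed.

Lemma clique_star_mxE r p q :
  clique_star_mx r p q = (p == q)%:R + (p == r)%:R + (r == q)%:R.
Proof.
rewrite mxE [r == q]eq_sym.
case: (eqVneq p q) => [<-|neq_pq]; first by case: (p == r); apply/eqP.
case: (eqVneq p r) => [eq_pr|_]; last by case: (q == r); apply/eqP.
by rewrite -eq_pr eq_sym (negbTE neq_pq); apply/eqP.
Qed.

Lemma sumr_const_F2 (c : 'F_2) : \sum_(l < k) c = c * (odd k)%:R.
Proof. by rewrite sumr_const card_ord -[c *+ k]mulr_natr natrF2. Qed.

Lemma sumr_delta p F : \sum_l (p == l)%:R * F l = F p.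
Proof.
rewrite (bigD1 p) //= eqxx mul1r big1 ?addr0 // => l neq_lp.
by rewrite eq_sym (negbTE neq_lp) mul0r.
Qed.

Lemma sumr_delta1 q : \sum_l (l == q)%:R = 1 :> 'F_2.
Proof.
by rewrite -[RHS](sumr_delta q (fun=> 1)); apply: eq_bigr => l _; rewrite eq_sym mulr1.
Qed.

Lemma const_mx1_neq0 p : const_mx 1 != 0 :> 'cV['F_2]_k.
Proof. by apply/eqP => /matrixP/(_ p 0); rewrite !mxE => /eqP; rewrite oner_eq0. Qed.

Lemma unitmx_complete_multipartite_mx :
  (complete_multipartite_mx \in unitmx) = ~~ odd k.
Proof.
have row_sum p F : \sum_l complete_multipartite_mx p l * F l = \sum_l F l + F p.
  under eq_bigr do rewrite complete_multipartite_mxE mulrDl mul1r.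
  by rewrite big_split sumr_delta.
case: (boolP (odd k)) => [odd_k | even_k].
  apply/negbTE/(notunitmx_ker (const_mx1_neq0 (Ordinal (odd_gt0 odd_k)))).
  apply/matrixP => p j; rewrite mxE; under eq_bigr do rewrite [const_mx _ _ _]mxE.
  by rewrite row_sum sumr_const_F2 odd_k mxE; apply/eqP.
have /mulmx1_unit[-> _] // : complete_multipartite_mx *m complete_multipartite_mx = 1%:M.
apply/matrixP => p q; rewrite mxE row_sum.
under eq_bigr do rewrite complete_multipartite_mxE.
rewrite big_split sumr_const_F2 (negbTE even_k) sumr_delta1.
by rewrite complete_multipartite_mxE [RHS]mxE; case: (p == q); apply/eqP.
Qed.

Lemma unitmx_clique_star_mx r : (clique_star_mx r \in unitmx) = odd k.
Proof.
have row_sum p F :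
    \sum_l clique_star_mx r p l * F l = F p + (p == r)%:R * \sum_l F l + F r.
  under eq_bigr do rewrite clique_star_mxE !mulrDl.
  by rewrite !big_split /= !sumr_delta -mulr_sumr.
case: (boolP (odd k)) => [odd_k | even_k]; last first.
  apply/negbTE/(notunitmx_ker (const_mx1_neq0 r)).
  apply/matrixP => p j; rewrite mxE; under eq_bigr do rewrite [const_mx _ _ _]mxE.
  by rewrite row_sum sumr_const_F2 (negbTE even_k) mxE; case: (p == r); apply/eqP.
pose Q : 'M['F_2]_k := \matrix_(l, q) (1 + (l == q)%:R + (l == r)%:R * (r == q)%:R).
have /mulmx1_unit[-> _] // : clique_star_mx r *m Q = 1%:M.
apply/matrixP => p q; rewrite mxE row_sum !mxE eqxx mul1r.
under eq_bigr do rewrite mxE.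
rewrite !big_split /= sumr_const_F2 odd_k sumr_delta1 -mulr_suml sumr_delta1.
by move: (p == q) (p == r) (r == q) => [] [] []; apply/eqP.
Qed.

End ParityMatrices.

Lemma rank_complete_multipartite_mx_neq k (r : 'I_k) :
  \rank (complete_multipartite_mx k) != \rank (clique_star_mx r).
Proof.
apply/eqP => eq_rank; have := unitmx_clique_star_mx r.
rewrite -row_full_unit /row_full -eq_rank -/(row_full _) row_full_unit.
by rewrite unitmx_complete_multipartite_mx; case: odd.
Qed.

Section PartiteCut.
Variables (k : nat) (n : 'I_k -> nat).

Lemma symmetric_complete_multipartite : symmetric (complete_multipartite n).
Proof. by move=> x y; rewrite /complete_multipartite eq_sym. Qed.

Lemma irreflexive_complete_multipartite : irreflexive (complete_multipartite n).
Proof. by move=> x; rewrite /complete_multipartite eqxx. Qed.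

Lemma symmetric_clique_star r : symmetric (clique_star n r).
Proof. by move=> x y; rewrite /clique_star eq_sym [y == x]eq_sym orbC. Qed.

Lemma irreflexive_clique_star r : irreflexive (clique_star n r).
Proof. by move=> x; rewrite /clique_star !eqxx. Qed.

Hypothesis n_gt1 : forall i, (1 < n i)%N.

Definition first_vertex i : kvert n :=
  Tagged (fun i => 'I_(n i)) (Ordinal (ltnW (n_gt1 i))).
Definition second_vertex i : kvert n := Tagged (fun i => 'I_(n i)) (Ordinal (n_gt1 i)).
Definition first_vertices : {set kvert n} := [set x | val (tagged x) == 0%N].

Lemma first_vertex_in i : first_vertex i \in first_vertices.
Proof. by rewrite inE. Qed.

Lemma second_vertex_notin i : second_vertex i \in ~: first_vertices.
Proof. by rewrite !inE. Qed.

Lemma cut_rank_complete_multipartite :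
  cut_rank (complete_multipartite n) first_vertices =
  \rank (complete_multipartite_mx k).
Proof.
by rewrite /cut_rank (cut_rank_quotient (f := tag) first_vertex_in second_vertex_notin).
Qed.

Lemma cut_rank_clique_star r :
  cut_rank (clique_star n r) first_vertices = \rank (clique_star_mx r).
Proof.
have first_neq_second p q : first_vertex p != second_vertex q.
  by apply/eqP => /(congr1 (fun x : kvert n => val (tagged x))).
rewrite /cut_rank (cut_rank_quotient (f := tag) first_vertex_in second_vertex_notin).
  congr (\rank _); apply/matrixP => p q; rewrite !mxE /clique_star /= first_neq_second.
  by case: (p == q).
move=> x y; rewrite !inE => x0 y0; rewrite /clique_star /= first_neq_second.
by have -> : x != y by apply: contraNneq y0 => <-.
Qed.

End PartiteCut.

Local Close Scope ring_scope.

Theorem theorem10 (k : nat) (n : 'I_k -> nat) (r : 'I_k) :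
  3 <= k -> (forall i, 2 <= n i) ->
  ~ (exists H : graph (@kvert k n),
       orbit_lc (complete_multipartite n) H /\ orbit_lc (clique_star n r) H).
Proof.
move=> _ n_gt1 [H [KH CSH]].
have := rank_complete_multipartite_mx_neq r.
rewrite -(cut_rank_complete_multipartite n_gt1) -(cut_rank_clique_star n_gt1 r).
rewrite -(cut_rank_loc_equiv _ (@symmetric_complete_multipartite _ n)
           (@irreflexive_complete_multipartite _ n) KH).
rewrite -(cut_rank_loc_equiv _ (@symmetric_clique_star _ n r)
           (@irreflexive_clique_star _ n r) CSH).
by rewrite eqxx.
Qed.
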